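(* For $n\geq1$ let $\ell_n=\sqrt[n]{n!}$. Then, as $n\to\infty$, $$\frac{\ell_{n+2}}{\ell_{n+1}}+\frac{\ell_n}{\ell_{n+1}}=2-\frac{1}{2n^3}+o\Big(\frac1{n^3}\Big).$$ In particular, the sequence $a_n=\ell_{n+1}-\ell_n$ is eventually strictly decreasing. *)

From Stdlib Require Import Reals Arith.
Open Scope R_scope.

Definition ell (n : nat) : R := Rpower (INR (fact n)) (/ INR n).

Definition a_seq (n : nat) : R := ell (S n) - ell n.

From Coquelicot Require Import Coquelicot.
From Stdlib Require Import Reals Arith Lra Lia.
Open Scope R_scope.

(* Put g_n = ln ((n+1)^n / n!).  Then ln (ell (n+1) / ell n) = g_n / (n (n+1)) =: v and
   ln (ell (n+2) / ell (n+1)) = (g_n + d) / ((n+1) (n+2)) =: u, where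
   d = g_(n+1) - g_n = (n+1) ln (1 + 1/(n+1)) = 1 - 1/(2(n+1)) + O(1/n^2) and
   g_n = n + e with -ln (n+1) <= e <= 0.  The sum to estimate is exp u + exp (-v).
   As v = O(1/n) and u - v = O(1/n^2), the third-order Taylor expansion gives
   exp u + exp (-v) = 2 + v^2 + (u - v)(1 + v) + O(1/n^4), and in the latter the terms of
   order 1/n^2, as well as the e-dependent terms of order 1/n^3, cancel exactly, leaving
   -1/(2 n^3) + O((1 + ln n)^2 / n^4); since (ln n)^2 = o(n) this is the expansion.  The
   negative n^-3 term means ell (n+2) + ell n < 2 ell (n+1) eventually. *)

Lemma ln_le_sub_1 x : 0 < x -> ln x <= x - 1.
Proof. intro Hx; pose proof (exp_ineq1_le (ln x)) as Hexp; rewrite exp_ln in Hexp; lra. Qed.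

Lemma one_add_ln_le_sqrt_sqrt x : 1 <= x -> 1 + ln x <= 4 * sqrt (sqrt x).
Proof.
intro Hx.
set (q := sqrt (sqrt x)).
assert (Hq : 1 <= q).
{ unfold q; rewrite <- sqrt_1; apply sqrt_le_1_alt.
  rewrite <- sqrt_1; apply sqrt_le_1_alt; lra. }
assert (Hx4 : x = q * q * (q * q)).
{ unfold q; rewrite !sqrt_sqrt; try lra; apply sqrt_pos. }
assert (Hln : ln x = 4 * ln q) by (rewrite Hx4, !ln_mult by nra; ring).
pose proof (ln_le_sub_1 q); lra.
Qed.

Lemma sqr_one_add_ln_le_sqrt x : 1 <= x -> (1 + ln x) ^ 2 <= 16 * sqrt x.
Proof.
intro Hx.
assert (0 <= ln x) by (rewrite <- ln_1; apply ln_le; lra).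
replace (16 * sqrt x) with ((4 * sqrt (sqrt x)) ^ 2)
  by (rewrite <- Rsqr_pow2, Rsqr_mult, Rsqr_sqrt by apply sqrt_pos; unfold Rsqr; ring).
apply pow_incr; split; [lra | now apply one_add_ln_le_sqrt_sqrt].
Qed.

Lemma nonneg_of_derive_nonneg (f f' : R -> R) (y : R) : 0 <= y -> f 0 = 0 ->
  (forall t, 0 <= t <= y -> is_derive f t (f' t) /\ 0 <= f' t) -> 0 <= f y.
Proof.
intros Hy Hf0 Hd.
destruct (MVT_gen f 0 y f') as [c [Hc E]].
- intros t Ht; rewrite Rmin_left, Rmax_right in Ht by lra; apply Hd; lra.
- intros t Ht; rewrite Rmin_left, Rmax_right in Ht by lra.
  apply continuity_pt_filterlim, (ex_derive_continuous f).
  exists (f' t); apply Hd, Ht.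
- rewrite Rmin_left, Rmax_right in Hc by lra.
  destruct (Hd c Hc) as [_ Hc']; nra.
Qed.

Lemma ln1p_bounds y : 0 <= y -> y - y ^ 2 / 2 <= ln (1 + y) <= y - y ^ 2 / 2 + y ^ 3 / 3.
Proof.
intro Hy.
assert (0 <= ln (1 + y) - (y - y ^ 2 / 2)).
{ apply (nonneg_of_derive_nonneg (fun t => ln (1 + t) - (t - t ^ 2 / 2))
    (fun t => t ^ 2 / (1 + t))); [lra | rewrite Rplus_0_r, ln_1; field |].
  intros t Ht; split; [auto_derive; [lra | field; lra] |].
  apply Rdiv_le_0_compat; nra. }
assert (0 <= y - y ^ 2 / 2 + y ^ 3 / 3 - ln (1 + y)).
{ apply (nonneg_of_derive_nonneg (fun t => t - t ^ 2 / 2 + t ^ 3 / 3 - ln (1 + t))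
    (fun t => t ^ 3 / (1 + t))); [lra | rewrite Rplus_0_r, ln_1; field |].
  intros t Ht; split; [auto_derive; [lra | field; lra] |].
  apply Rdiv_le_0_compat; [apply pow_le |]; lra. }
lra.
Qed.

Lemma mul_ln1p_inv_bounds x : 0 < x ->
  0 <= x * ln (1 + / x) - (1 - / (2 * x)) <= / (3 * x ^ 2).
Proof.
intro Hx.
assert (Hy : 0 < / x) by now apply Rinv_0_lt_compat.
destruct (ln1p_bounds (/ x)) as [Hlo Hhi]; [lra |].
apply Rmult_le_compat_l with (r := x) in Hlo, Hhi; try lra.
replace (x * (/ x - (/ x) ^ 2 / 2)) with (1 - / (2 * x)) in Hlo by (field; lra).
replace (x * (/ x - (/ x) ^ 2 / 2 + (/ x) ^ 3 / 3)) with (1 - / (2 * x) + / (3 * x ^ 2))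
  in Hhi by (field; lra).
lra.
Qed.

Lemma Derive_n_exp_scal c k t : Derive_n (fun s => exp (c * s)) k t = c ^ k * exp (c * t).
Proof.
revert t; induction k as [| k IH]; intro t; [simpl; ring |].
simpl; rewrite (Derive_ext _ (fun s => c ^ k * exp (c * s)) _ IH).
apply is_derive_unique; auto_derive; [easy | ring].
Qed.

Lemma ex_derive_n_exp_scal c k t : ex_derive_n (fun s => exp (c * s)) k t.
Proof.
destruct k as [| k]; [easy |]; simpl.
apply (ex_derive_ext (fun s => c ^ k * exp (c * s))).
- intro; now rewrite Derive_n_exp_scal.
- auto_derive; easy.
Qed.

Lemma exp_scal_taylor3 c t : 0 < t -> exists z, 0 < z < t /\
  exp (c * t) = 1 + c * t + (c * t) ^ 2 / 2 + (c * t) ^ 3 / 6 + (c * t) ^ 4 / 24 * exp (c * z).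
Proof.
intro Ht.
destruct (Taylor_Lagrange (fun s => exp (c * s)) 3 0 t Ht) as [z [Hz E]].
{ intros; apply ex_derive_n_exp_scal. }
exists z; split; [exact Hz |].
rewrite E; cbn [sum_f_R0]; rewrite !Derive_n_exp_scal, Rmult_0_r, exp_0.
simpl; field.
Qed.

Lemma exp_taylor3_bounds t : Rabs t <= 1 ->
  0 <= exp t - (1 + t + t ^ 2 / 2 + t ^ 3 / 6) <= t ^ 4.
Proof.
intro Ht; apply Rabs_le_between in Ht.
assert (Ht4 : 0 <= t ^ 4) by (replace (t ^ 4) with ((t ^ 2) ^ 2) by ring; apply pow2_ge_0).
destruct (Rtotal_order t 0) as [Hneg | [-> | Hpos]].
- destruct (exp_scal_taylor3 (-1) (- t)) as [z [Hz E]]; [lra |].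
  replace (-1 * - t) with t in E by ring; rewrite E.
  assert (exp (-1 * z) <= 1) by (rewrite <- exp_0; apply Rlt_le, exp_increasing; lra).
  pose proof (exp_pos (-1 * z)).
  replace (t ^ 4 / 24 * exp (-1 * z)) with (t ^ 4 * (exp (-1 * z) / 24)) by field.
  split; [| assert (t ^ 4 * (exp (-1 * z) / 24) <= t ^ 4 * 1)]; nra.
- rewrite exp_0; lra.
- destruct (exp_scal_taylor3 1 t) as [z [Hz E]]; [lra |].
  rewrite Rmult_1_l in E; rewrite E, Rmult_1_l.
  assert (exp z <= 3)
    by (apply Rle_trans with (exp 1); [apply Rlt_le, exp_increasing; lra | apply exp_le_3]).
  pose proof (exp_pos z).
  replace (t ^ 4 / 24 * exp z) with (t ^ 4 * (exp z / 24)) by field.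
  split; [| assert (t ^ 4 * (exp z / 24) <= t ^ 4 * 1)]; nra.
Qed.

Lemma cubic_cross_terms_bound X v h : 0 <= X <= 1 -> 0 <= v <= X -> Rabs h <= 2 * X ^ 2 ->
  Rabs (h ^ 2 / 2 + v ^ 2 * h / 2 + v * h ^ 2 / 2 + h ^ 3 / 6) <= 7 * X ^ 4.
Proof.
intros HX Hv Hh.
assert (X ^ 2 <= 1) by (rewrite <- (pow1 2); apply pow_incr; lra).
assert (v ^ 2 <= X ^ 2) by (apply pow_incr; lra).
assert (0 <= X ^ 4) by (apply pow_le; lra).
assert (Hbound : forall a, 0 <= a <= 2 * X ^ 2 ->
  a ^ 2 / 2 + v ^ 2 * a / 2 + v * a ^ 2 / 2 + a ^ 3 / 6 <= 7 * X ^ 4).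
{ intros a Ha.
  assert (a ^ 2 <= 4 * X ^ 4) by (replace (4 * X ^ 4) with ((2 * X ^ 2) ^ 2) by ring;
                                   apply pow_incr; lra).
  assert (v ^ 2 * a <= 2 * X ^ 4)
    by (replace (2 * X ^ 4) with (X ^ 2 * (2 * X ^ 2)) by ring; apply Rmult_le_compat; nra).
  assert (v * a ^ 2 <= 4 * X ^ 4)
    by (replace (4 * X ^ 4) with (1 * (4 * X ^ 4)) by ring; apply Rmult_le_compat; nra).
  assert (a ^ 3 <= 8 * X ^ 4).
  { apply Rle_trans with (2 * X ^ 2 * (4 * X ^ 4)); [simpl; apply Rmult_le_compat; nra | nra]. }
  lra. }
destruct (Rle_or_lt 0 h) as [Hh0 | Hh0].
- rewrite Rabs_pos_eq in Hh by lra.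
  specialize (Hbound h ltac:(lra)).
  rewrite Rabs_pos_eq; [lra |].
  assert (0 <= v * h ^ 2) by nra. assert (0 <= v ^ 2 * h) by nra. simpl in *; nra.
- rewrite Rabs_left in Hh by lra.
  specialize (Hbound (- h) ltac:(lra)).
  assert (0 <= v ^ 2 * - h) by nra. assert (0 <= v * (- h) ^ 2) by nra.
  assert (0 <= (- h) ^ 3) by (apply pow_le; lra).
  assert (0 <= (- h) ^ 2) by (apply pow_le; lra).
  replace (h ^ 2 / 2 + v ^ 2 * h / 2 + v * h ^ 2 / 2 + h ^ 3 / 6)
    with ((- h) ^ 2 / 2 - v ^ 2 * - h / 2 + v * (- h) ^ 2 / 2 - (- h) ^ 3 / 6) by field.
  apply Rabs_le; split; lra.
Qed.

Lemma exp_add_exp_opp_approx X u v : 0 <= X <= 1 -> 0 <= u <= X -> 0 <= v <= X ->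
  Rabs (u - v) <= 2 * X ^ 2 ->
  Rabs (exp u + exp (- v) - (2 + v ^ 2 + (u - v) * (1 + v))) <= 9 * X ^ 4.
Proof.
intros HX Hu Hv Hh.
destruct (exp_taylor3_bounds u) as [Tu Tu']; [rewrite Rabs_pos_eq; lra |].
destruct (exp_taylor3_bounds (- v)) as [Tv Tv']; [rewrite Rabs_Ropp, Rabs_pos_eq; lra |].
set (h := u - v) in *.
assert (Hu4 : u ^ 4 <= X ^ 4) by (apply pow_incr; lra).
assert (Hv4 : (- v) ^ 4 <= X ^ 4) by (replace ((- v) ^ 4) with (v ^ 4) by ring; apply pow_incr; lra).
replace (exp u + exp (- v) - (2 + v ^ 2 + h * (1 + v)))
  with ((exp u - (1 + u + u ^ 2 / 2 + u ^ 3 / 6))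
        + (exp (- v) - (1 + - v + (- v) ^ 2 / 2 + (- v) ^ 3 / 6))
        + (h ^ 2 / 2 + v ^ 2 * h / 2 + v * h ^ 2 / 2 + h ^ 3 / 6))
  by (unfold h; field).
pose proof (cubic_cross_terms_bound X v h HX Hv Hh) as Hr.
eapply Rle_trans; [apply Rabs_triang |].
rewrite Rabs_pos_eq by lra.
lra.
Qed.

Lemma main_term_eq n e d : 0 < n ->
  let v := (n + e) / (n * (n + 1)) in
  let u := (n + e + d) / ((n + 1) * (n + 2)) in
  v ^ 2 + (u - v) * (1 + v) + / (2 * n ^ 3)
  = (3 * n + 2) / (2 * n ^ 3 * (n + 1) * (n + 2))
    + ((d - (1 - / (2 * (n + 1)))) * (n + 1) ^ 2 + (e - 1) * (e - 1 + d))
      / (n * (n + 1) ^ 2 * (n + 2)).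
Proof. intros Hn v u; unfold v, u; field; lra. Qed.

Lemma near_one_bounds n d : 1 <= n ->
  0 <= d - (1 - / (2 * (n + 1))) <= / (3 * (n + 1) ^ 2) -> 1 / 2 <= d <= 1.
Proof.
intros Hn Hd.
assert (/ (2 * (n + 1)) <= / 4) by (apply Rinv_le_contravar; lra).
assert (/ (3 * (n + 1) ^ 2) <= / (2 * (n + 1))) by (apply Rinv_le_contravar; nra).
assert (0 < / (2 * (n + 1))) by (apply Rinv_0_lt_compat; lra).
lra.
Qed.

Lemma main_term_bound n e d E : 1 <= n -> - E <= e <= 0 ->
  0 <= d - (1 - / (2 * (n + 1))) <= / (3 * (n + 1) ^ 2) ->
  let v := (n + e) / (n * (n + 1)) in
  let u := (n + e + d) / ((n + 1) * (n + 2)) in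
  Rabs (v ^ 2 + (u - v) * (1 + v) + / (2 * n ^ 3)) <= (4 + (1 + E) ^ 2) / n ^ 4.
Proof.
intros Hn He Hd v u; unfold v, u; rewrite main_term_eq by lra.
set (r := d - (1 - / (2 * (n + 1)))) in *.
assert (Hn4 : 0 < n ^ 4) by (apply pow_lt; lra).
assert (Hr : 0 <= r * (n + 1) ^ 2 <= / 3).
{ split; [apply Rmult_le_pos; [lra | apply pow_le; lra] |].
  replace (/ 3) with (/ (3 * (n + 1) ^ 2) * (n + 1) ^ 2) by (field; lra).
  apply Rmult_le_compat_r; [apply pow_le |]; lra. }
pose proof (near_one_bounds n d Hn Hd) as Hd1.
assert (He2 : 0 <= (e - 1) * (e - 1 + d) <= (1 + E) ^ 2) by (split; nra).
assert (H1 : 0 <= (3 * n + 2) / (2 * n ^ 3 * (n + 1) * (n + 2)) <= 3 / n ^ 4).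
{ split; [apply Rdiv_le_0_compat; nra |].
  apply Rmult_le_reg_r with (n ^ 4 * (2 * n ^ 3 * (n + 1) * (n + 2))); [nra |].
  replace ((3 * n + 2) / (2 * n ^ 3 * (n + 1) * (n + 2))
           * (n ^ 4 * (2 * n ^ 3 * (n + 1) * (n + 2)))) with ((3 * n + 2) * n ^ 4)
    by (field; lra).
  replace (3 / n ^ 4 * (n ^ 4 * (2 * n ^ 3 * (n + 1) * (n + 2))))
    with (6 * n ^ 3 * (n + 1) * (n + 2)) by (field; lra).
  assert (0 < n ^ 3) by (apply pow_lt; lra).
  replace (n ^ 4) with (n ^ 3 * n) by ring; nra. }
assert (H2 : 0 <= (r * (n + 1) ^ 2 + (e - 1) * (e - 1 + d)) / (n * (n + 1) ^ 2 * (n + 2))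
             <= (/ 3 + (1 + E) ^ 2) / n ^ 4).
{ split; [apply Rdiv_le_0_compat; nra |].
  unfold Rdiv; apply Rmult_le_compat; try lra.
  - apply Rlt_le, Rinv_0_lt_compat; nra.
  - apply Rinv_le_contravar; [exact Hn4 |].
    replace (n ^ 4) with (n * n ^ 2 * n) by ring.
    apply Rmult_le_compat; try nra. }
rewrite Rabs_pos_eq by lra.
assert (3 / n ^ 4 + (/ 3 + (1 + E) ^ 2) / n ^ 4 <= (4 + (1 + E) ^ 2) / n ^ 4)
  by (unfold Rdiv; rewrite <- Rmult_plus_distr_r; apply Rmult_le_compat_r;
      [apply Rlt_le, Rinv_0_lt_compat |]; lra).
lra.
Qed.

Lemma exp_sum_bound n e d E : 1 <= n -> E <= n -> - E <= e <= 0 ->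
  0 <= d - (1 - / (2 * (n + 1))) <= / (3 * (n + 1) ^ 2) ->
  Rabs (exp ((n + e + d) / ((n + 1) * (n + 2))) + exp (- ((n + e) / (n * (n + 1))))
        - (2 - / (2 * n ^ 3)))
  <= (13 + (1 + E) ^ 2) / n ^ 4.
Proof.
intros Hn HE He Hd.
pose proof (main_term_bound n e d E Hn He Hd) as Hmain; cbv zeta in Hmain.
set (v := (n + e) / (n * (n + 1))) in *.
set (u := (n + e + d) / ((n + 1) * (n + 2))) in *.
set (X := / n).
assert (HX : 0 < X <= 1)
  by (split; [apply Rinv_0_lt_compat | rewrite <- Rinv_1; apply Rinv_le_contravar]; lra).
pose proof (near_one_bounds n d Hn Hd) as Hd1.
assert (Hv : 0 <= v <= X).
{ split; [unfold v; apply Rdiv_le_0_compat; nra |].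
  enough (0 <= X - v) by lra.
  replace (X - v) with ((1 - e) / (n * (n + 1))) by (unfold X, v; field; lra).
  apply Rdiv_le_0_compat; nra. }
assert (Hu : 0 <= u <= X).
{ split; [unfold u; apply Rdiv_le_0_compat; nra |].
  enough (0 <= X - u) by lra.
  replace (X - u) with (((n + 1) * (n + 2) - n * (n + e + d)) / (n * (n + 1) * (n + 2)))
    by (unfold X, u; field; lra).
  apply Rdiv_le_0_compat; nra. }
assert (Hdiff : Rabs (u - v) <= 2 * X ^ 2).
{ assert (Hnum : Rabs (n * d - 2 * (n + e)) <= 2 * n) by (apply Rabs_le; split; nra).
  replace (u - v) with ((n * d - 2 * (n + e)) / (n * (n + 1) * (n + 2)))
    by (unfold u, v; field; lra).
  unfold Rdiv; rewrite Rabs_mult, Rabs_inv, (Rabs_pos_eq (n * (n + 1) * (n + 2))) by nra.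
  apply Rle_trans with (2 * n * / (n * (n + 1) * (n + 2))).
  - apply Rmult_le_compat_r; [apply Rlt_le, Rinv_0_lt_compat; nra | exact Hnum].
  - enough (0 <= 2 * X ^ 2 - 2 * n * / (n * (n + 1) * (n + 2))) by lra.
    replace (2 * X ^ 2 - 2 * n * / (n * (n + 1) * (n + 2)))
      with (2 * (3 * n + 2) / (n ^ 2 * (n + 1) * (n + 2))) by (unfold X; field; lra).
    apply Rdiv_le_0_compat; nra. }
pose proof (exp_add_exp_opp_approx X u v ltac:(lra) Hu Hv Hdiff) as Htaylor.
replace (exp u + exp (- v) - (2 - / (2 * n ^ 3)))
  with ((exp u + exp (- v) - (2 + v ^ 2 + (u - v) * (1 + v)))
        + (v ^ 2 + (u - v) * (1 + v) + / (2 * n ^ 3))) by ring.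
eapply Rle_trans; [apply Rabs_triang |].
replace ((13 + (1 + E) ^ 2) / n ^ 4) with (9 * X ^ 4 + (4 + (1 + E) ^ 2) / n ^ 4)
  by (unfold X; field; lra).
lra.
Qed.

Definition ln_pow_div_fact (n : nat) : R := INR n * ln (INR n + 1) - ln (INR (fact n)).

Lemma INR_succ_pos m : 0 < INR m + 1.
Proof. pose proof (pos_INR m); lra. Qed.

Lemma ln_fact_S m : ln (INR (fact (S m))) = ln (INR m + 1) + ln (INR (fact m)).
Proof.
change (fact (S m)) with (S m * fact m)%nat.
rewrite mult_INR, S_INR, ln_mult; [reflexivity | apply INR_succ_pos |].
apply lt_0_INR, lt_O_fact.
Qed.

Lemma ln_pow_div_fact_S m :
  ln_pow_div_fact (S m) = ln_pow_div_fact m + (INR m + 1) * ln (1 + / (INR m + 1)).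
Proof.
pose proof (INR_succ_pos m) as Hm.
unfold ln_pow_div_fact; rewrite ln_fact_S, S_INR.
replace (INR m + 1 + 1) with ((INR m + 1) * (1 + / (INR m + 1))) by (field; lra).
rewrite ln_mult; [ring | lra |].
pose proof (Rinv_0_lt_compat _ Hm); lra.
Qed.

Lemma ln_pow_div_fact_bounds m :
  INR m - ln (INR m + 1) <= ln_pow_div_fact m <= INR m.
Proof.
induction m as [| m IH].
- unfold ln_pow_div_fact; simpl; rewrite Rplus_0_l, ln_1; lra.
- pose proof (INR_succ_pos m) as Hm.
  rewrite ln_pow_div_fact_S, S_INR.
  set (y := / (INR m + 1)).
  set (D := (INR m + 1) * ln (1 + y)).
  assert (Hy : 0 < y <= 1).
  { split; [now apply Rinv_0_lt_compat |].
    rewrite <- Rinv_1; apply Rinv_le_contravar; [lra | pose proof (pos_INR m); lra]. }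
  assert (HD : 1 - y / 2 <= D <= 1).
  { destruct (mul_ln1p_inv_bounds (INR m + 1) Hm) as [Hlo Hhi]; fold y D in Hlo, Hhi.
    replace (/ (2 * (INR m + 1))) with (y / 2) in * by (unfold y; field; lra).
    replace (/ (3 * (INR m + 1) ^ 2)) with (y ^ 2 / 3) in Hhi by (unfold y; field; lra).
    nra. }
  assert (Hln : ln (INR m + 1 + 1) = ln (INR m + 1) + y * D).
  { replace (y * D) with (ln (1 + y)) by (unfold D, y; field; lra).
    rewrite <- ln_mult by lra; f_equal; unfold y; field; lra. }
  rewrite Hln.
  assert (0 <= (D - (1 - y / 2)) * (1 + y)) by (apply Rmult_le_pos; lra).
  split; nra.
Qed.

Lemma ell_S_div_ell m : (1 <= m)%nat ->
  ell (S m) / ell m = exp (ln_pow_div_fact m / (INR m * (INR m + 1))).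
Proof.
intro Hm; assert (0 < INR m) by (apply lt_0_INR; lia).
unfold ell, Rpower, Rdiv at 1; rewrite <- exp_Ropp, <- exp_plus, ln_fact_S, S_INR.
f_equal; unfold ln_pow_div_fact; field; lra.
Qed.

Lemma ell_ratio_sum_bound n : (1 <= n)%nat ->
  Rabs (ell (n + 2) / ell (n + 1) + ell n / ell (n + 1) - (2 - / (2 * INR n ^ 3)))
  <= (13 + (1 + ln (INR n + 1)) ^ 2) / INR n ^ 4.
Proof.
intro Hn.
replace (n + 2)%nat with (S (S n)) by lia; replace (n + 1)%nat with (S n) by lia.
assert (Hell : forall m, 0 < ell m) by (intro; apply exp_pos).
replace (ell n / ell (S n)) with (/ (ell (S n) / ell n))
  by (field; split; apply Rgt_not_eq, Hell).
rewrite (ell_S_div_ell (S n)), (ell_S_div_ell n), <- exp_Ropp by lia.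
rewrite ln_pow_div_fact_S, !S_INR.
destruct (ln_pow_div_fact_bounds n) as [Hlo Hhi].
replace (ln_pow_div_fact n) with (INR n + (ln_pow_div_fact n - INR n)) by ring.
replace (INR n + 1 + 1) with (INR n + 2) by ring.
apply exp_sum_bound.
- apply (le_INR 1); lia.
- pose proof (ln_le_sub_1 (INR n + 1)); pose proof (pos_INR n); lra.
- lra.
- apply mul_ln1p_inv_bounds; pose proof (pos_INR n); lra.
Qed.

Lemma ln_sqr_little_o C eps : 0 < eps -> exists N : nat, forall n : nat, (N <= n)%nat ->
  (1 <= n)%nat -> C + (1 + ln (INR n + 1)) ^ 2 <= eps * INR n.
Proof.
intro Heps.
set (K := Rabs C + 32).
destruct (INR_archimed 1 ((K / eps) ^ 2) ltac:(lra)) as [N HN].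
exists N; intros n HNn Hn.
assert (H1 : 1 <= INR n) by (apply (le_INR 1); lia).
set (s := sqrt (INR n)).
assert (Hs : 1 <= s) by (unfold s; rewrite <- sqrt_1; apply sqrt_le_1_alt; lra).
assert (Hss : s * s = INR n) by (unfold s; apply sqrt_sqrt; lra).
assert (Hlog : (1 + ln (INR n + 1)) ^ 2 <= 32 * s).
{ apply Rle_trans with (16 * sqrt (INR n + 1)); [apply sqr_one_add_ln_le_sqrt; lra |].
  assert (Hsqrt : sqrt (INR n + 1) <= sqrt (4 * INR n)) by (apply sqrt_le_1_alt; lra).
  rewrite sqrt_mult, (sqrt_lem_1 4 2) in Hsqrt by lra; fold s in Hsqrt; lra. }
assert (HK : K <= eps * s).
{ assert (HNn' : INR N <= INR n) by (apply le_INR; lia).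
  assert (Hq : K / eps <= s).
  { destruct (Rle_or_lt (K / eps) s) as [| Hlt]; [assumption |].
    assert (s * s < (K / eps) * (K / eps)) by nra.
    simpl in HN; lra. }
  apply Rmult_le_compat_l with (r := eps) in Hq; [| lra].
  replace (eps * (K / eps)) with K in Hq by (field; lra); exact Hq. }
assert (C <= Rabs C * s) by (pose proof (Rle_abs C); pose proof (Rabs_pos C); nra).
assert (K * s <= eps * s * s) by (apply Rmult_le_compat_r; lra).
replace (eps * INR n) with (eps * s * s) by (rewrite <- Hss; ring).
unfold K in *; lra.
Qed.

Lemma ell_ratio_sum_asymptotic (eps : R) : 0 < eps ->
  exists N : nat, forall n : nat, (N <= n)%nat -> (1 <= n)%nat ->
    Rabs (ell (n + 2) / ell (n + 1) + ell n / ell (n + 1) - (2 - / (2 * INR n ^ 3)))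
    <= eps / INR n ^ 3.
Proof.
intro Heps; destruct (ln_sqr_little_o 13 eps Heps) as [N HN].
exists N; intros n HNn Hn.
eapply Rle_trans; [now apply ell_ratio_sum_bound |].
assert (0 < INR n) by (apply lt_0_INR; lia).
replace (eps / INR n ^ 3) with (eps * INR n / INR n ^ 4) by (field; lra).
apply Rmult_le_compat_r; [apply Rlt_le, Rinv_0_lt_compat, pow_lt; lra | auto].
Qed.

Lemma a_seq_S_lt n : ell (n + 2) / ell (n + 1) + ell n / ell (n + 1) < 2 ->
  a_seq (S n) < a_seq n.
Proof.
intro Hsum; unfold a_seq.
replace (n + 2)%nat with (S (S n)) in Hsum by lia; replace (n + 1)%nat with (S n) in Hsum by lia.
assert (Hpos : 0 < ell (S n)) by apply exp_pos.
replace (ell (S (S n)) / ell (S n) + ell n / ell (S n)) with ((ell (S (S n)) + ell n) / ell (S n))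
  in Hsum by (field; lra).
apply Rmult_lt_compat_r with (r := ell (S n)) in Hsum; [| lra].
unfold Rdiv in Hsum; rewrite Rmult_assoc, Rinv_l in Hsum by lra; lra.
Qed.

Theorem mainTheorem5 :
  (forall eps : R, 0 < eps ->
     exists N : nat, forall n : nat, (N <= n)%nat -> (1 <= n)%nat ->
       Rabs (ell (n + 2) / ell (n + 1) + ell n / ell (n + 1)
             - (2 - / (2 * INR n ^ 3)))
       <= eps / INR n ^ 3)
  /\
  (exists N : nat, forall n : nat, (N <= n)%nat -> a_seq (S n) < a_seq n).
Proof.
split; [exact ell_ratio_sum_asymptotic |].
destruct (ell_ratio_sum_asymptotic (/ 4)) as [N HN]; [lra |].
exists (Nat.max N 1); intros n Hn; apply a_seq_S_lt.
specialize (HN n ltac:(lia) ltac:(lia)); apply Rabs_le_between in HN.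
assert (0 < / INR n ^ 3) by (apply Rinv_0_lt_compat, pow_lt, lt_0_INR; lia).
replace (/ (2 * INR n ^ 3)) with (2 * (/ 4 / INR n ^ 3)) in HN
  by (field; apply not_0_INR; lia).
unfold Rdiv in HN; lra.
Qed.
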